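(* Let $m\ge 3$ and $H=\Theta(l_1,\ldots,l_m)$ with $l_1=\cdots=l_m=4$, and let $G=H^2$. Then $G$ is equitably $(m+2)$-choosable.
   Context: $\Theta(l_1,\ldots,l_m)$ denotes the graph consisting of two vertices $u,w$ joined by $m$ internally disjoint paths of lengths $l_1,\ldots,l_m$. For a graph $H$, $H^2$ has vertex set $V(H)$ with two vertices adjacent iff their distance in $H$ is 1 or 2. A $k$-assignment $L$ assigns to each vertex a set of exactly $k$ colors; an equitable $L$-coloring of $G$ is a proper coloring $f$ with $f(v)\in L(v)$ such that no color is used more than $\lceil |V(G)|/k\rceil$ times; $G$ is equitably $k$-choosable if it has an equitable $L$-coloring for every $k$-assignment $L$. *)

From mathcomp Require Import all_boot.
Set Implicit Arguments. Unset Strict Implicit. Unset Printing Implicit Defensive.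

(* Vertices of Theta(l_1,...,l_m): the two poles  u := inl false,  w := inl true,
   and for each path i the internal vertices (i, j), j = 0 .. l_i - 2,
   listed in order from u to w. *)
Definition theta_vertex (m : nat) (l : 'I_m -> nat) : finType :=
  (bool + {i : 'I_m & 'I_(l i).-1})%type.

Definition theta_edge (m : nat) (l : 'I_m -> nat)
    (x y : theta_vertex l) : bool :=
  match x, y with
  | inl false, inr (existT _ j) => val j == 0
  | inr (existT i j), inr (existT i' j') => (i == i') && ((val j).+1 == val j')
  | inr (existT i j), inl true => val j == (l i).-2
  | inl false, inl true => [exists i, l i == 1]
  | _, _ => false
  end.

Definition theta_adj (m : nat) (l : 'I_m -> nat) : rel (theta_vertex l) :=
  fun x y => theta_edge x y || theta_edge y x.

Definition sq_adj (V : finType) (adj : rel V) : rel V :=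
  fun x y => (x != y) && (adj x y || [exists z, adj x z && adj z y]).

Definition k_assignment (V : finType) (k : nat) (L : V -> seq nat) : Prop :=
  forall v, uniq (L v) /\ size (L v) = k.

Definition equitable_L_coloring (V : finType) (adj : rel V) (k : nat)
    (L : V -> seq nat) (f : V -> nat) : Prop :=
  [/\ forall v, f v \in L v,
      forall x y, adj x y -> f x != f y &
      forall c, #|[pred v | f v == c]| <= (#|V| + k.-1) %/ k].

Definition equitably_choosable (V : finType) (adj : rel V) (k : nat) : Prop :=
  forall L : V -> seq nat, k_assignment k L ->
    exists f : V -> nat, equitable_L_coloring adj k L f.

From mathcomp Require Import all_boot zify.
Set Implicit Arguments. Unset Strict Implicit. Unset Printing Implicit Defensive.

(* Write u, w for the poles and x(i,0), x(i,1), x(i,2) for the inner vertices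
   of the i-th path.  Sort the 3m+2 vertices into three levels:
   {u} + {x(i,0)}, {x(i,1)} and {w} + {x(i,2)}.  In the square G, two
   adjacent vertices either lie on a common level or are "linked": on one
   path, or a pole and a middle vertex.  Hence a colouring that is injective
   on every level and separates linked pairs is proper, and each of its colour
   classes meets every level at most once, so has at most 3 <= ceil((3m+2)/(m+2))
   vertices: it is equitable.
   Such a colouring is built from the lists in three rounds: the poles take
   arbitrary colours; the middle level takes distinct colours avoiding both
   poles (a greedy choice, lists of size m for m vertices); finally the outer
   levels form a prism K_m x K_2 whose residual lists have size >= m, and that
   prism is m-choosable (three cases, each settled by greedy choices). *)

Definition avail (l F : seq nat) : seq nat := [seq c <- l | c \notin F].

Lemma mem_avail (l F : seq nat) (c : nat) :
  (c \in avail l F) = (c \in l) && (c \notin F).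
Proof. by rewrite mem_filter andbC. Qed.

Lemma mem_avail2 (l : seq nat) (a b c : nat) :
  (c \in avail l [:: a; b]) = [&& c \in l, c != a & c != b].
Proof. by rewrite mem_avail !inE negb_or. Qed.

Lemma avail_uniq (l F : seq nat) : uniq l -> uniq (avail l F).
Proof. exact: filter_uniq. Qed.

Lemma size_avail (l F : seq nat) : uniq l -> size l - size F <= size (avail l F).
Proof.
move=> ul; rewrite leq_subLR size_filter -(count_predC (mem F) l).
apply: leq_add => //; rewrite -size_filter; apply: uniq_leq_size; first exact: filter_uniq.
by move=> c; rewrite mem_filter => /andP[].
Qed.

Lemma exists_avail (l F : seq nat) :
  uniq l -> size F < size l -> exists c, c \in avail l F.
Proof.
move=> ul ltFl; have := size_avail F ul.
case: (avail l F) => [|c s] /=; last by exists c; rewrite mem_head.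
by rewrite leqn0 subn_eq0 leqNgt ltFl.
Qed.

(* Greedy system of distinct representatives: colouring the elements of s in
   order, the n-th one needs a list of more than n colours. *)
Lemma greedy_choice (I : eqType) (M : I -> seq nat) (s : seq I) :
  uniq s -> {in s, forall x, uniq (M x)} -> {in s, forall x, index x s < size (M x)} ->
  exists g : I -> nat, {in s, forall x, g x \in M x} /\ {in s &, injective g}.
Proof.
elim/last_ind: s => [|s x IH]; first by exists (fun=> 0).
rewrite rcons_uniq => /andP[xNs us] uM ltM.
have in_s y : y \in s -> y \in rcons s x by rewrite mem_rcons inE => ->; rewrite orbT.
have [|y ys|g [gM g_inj]] := IH us; first by move=> y /in_s /uM.
  by have := ltM y (in_s y ys); rewrite -cats1 index_cat ys.
have [||c cM] := @exists_avail (M x) [seq g y | y <- s].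
- by apply: uM; rewrite mem_rcons mem_head.
- have := ltM x; rewrite mem_rcons mem_head -cats1 index_cat (negbTE xNs).
  by rewrite /= eqxx addn0 size_map => /(_ isT).
rewrite mem_avail in cM; case/andP: cM => cM c_fresh.
exists (fun y => if y == x then c else g y); split.
  by move=> y; rewrite mem_rcons inE; case: eqP => [->|_] //= /gM.
move=> y1 y2; rewrite !mem_rcons !inE.
case: (eqVneq y1 x) => [->|_]; case: (eqVneq y2 x) => [->|_] //= y1s y2s.
- by move=> e; move: c_fresh; rewrite e map_f.
- by move=> e; move: c_fresh; rewrite -e map_f.
- exact: g_inj.
Qed.

(* Greedy choice when all lists but one may be one colour short: colour the
   element z with the full list last. *)
Lemma greedy_choice_deficient (I : eqType) (M : I -> seq nat) (s : seq I) (z : I) :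
  uniq s -> z \in s -> {in s, forall x, uniq (M x)} ->
  {in s, forall x, (size s).-1 <= size (M x)} -> size s <= size (M z) ->
  exists g : I -> nat, {in s, forall x, g x \in M x} /\ {in s &, injective g}.
Proof.
move=> us zs uM leM leMz; set s' := rcons (rem z s) z.
have eq_s : s =i s' by apply: perm_mem; rewrite perm_sym perm_rcons perm_sym perm_to_rem.
have zNr : z \notin rem z s by rewrite mem_rem_uniqF.
have size_r : size (rem z s) = (size s).-1 by rewrite size_rem.
have [|||g [gM g_inj]] := @greedy_choice I M s'.
- by rewrite rcons_uniq zNr rem_uniq.
- by move=> x; rewrite -eq_s; apply: uM.
- move=> x; rewrite -eq_s => xs; rewrite /s' -cats1 index_cat.
  case: ifP => [xr | /negbT xNr].
    by apply: leq_trans (leM x xs); rewrite -size_r index_mem.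
  have -> : x = z by apply: contraNeq xNr => xz; rewrite (mem_rem_uniq _ us) inE xz.
  rewrite /= eqxx addn0 size_r; apply: leq_trans leMz.
  by rewrite ltn_predL; case: (s) zs.
exists g; split; first by move=> x; rewrite eq_s; apply: gM.
by move=> x y; rewrite !eq_s; apply: g_inj.
Qed.

Lemma distinct_choice (I : finType) (M : I -> seq nat) (z : I) :
  (forall k, uniq (M k)) -> (forall k, #|I|.-1 <= size (M k)) -> #|I| <= size (M z) ->
  exists g : I -> nat, (forall k, g k \in M k) /\ injective g.
Proof.
move=> uM leM leMz; have [|||||g [gM g_inj]] := @greedy_choice_deficient I M (enum I) z.
- exact: enum_uniq.
- by rewrite mem_enum.
- by move=> k _; apply: uM.
- by move=> k _; rewrite -cardT.
- by rewrite -cardT.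
exists g; split; first by move=> k; apply: gM; rewrite mem_enum.
by move=> x y; apply: g_inj; rewrite mem_enum.
Qed.

Lemma pinned_choice (I : finType) (M : I -> seq nat) (i z : I) (y : nat) :
  z != i -> (forall k, uniq (M k)) -> (forall k, k != i -> y \notin M k) ->
  (forall k, k != i -> #|I|.-2 <= size (M k)) -> #|I|.-1 <= size (M z) ->
  exists g : I -> nat, [/\ g i = y, forall k, k != i -> g k \in M k & injective g].
Proof.
move=> zi uM yNM leM leMz.
have mem_r k : (k \in rem i (enum I)) = (k != i).
  by rewrite (mem_rem_uniq _ (enum_uniq _)) inE mem_enum andbT.
have size_r : size (rem i (enum I)) = #|I|.-1 by rewrite size_rem ?mem_enum // cardT.
have [|||||g [gM g_inj]] := @greedy_choice_deficient I M (rem i (enum I)) z.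
- exact/rem_uniq/enum_uniq.
- by rewrite mem_r.
- by move=> k _; apply: uM.
- by move=> k; rewrite mem_r size_r => /leM; rewrite -!subn1 -subnDA.
- by rewrite size_r.
have gNy k : k != i -> g k != y.
  by move=> ki; apply: contraNneq (yNM _ ki) => <-; apply: gM; rewrite mem_r.
exists (fun k => if k == i then y else g k); split=> [|k ki|k1 k2]; first by rewrite eqxx.
  by rewrite (negbTE ki) gM ?mem_r.
case: (eqVneq k1 i) => [->|k1i]; case: (eqVneq k2 i) => [->|k2i] //.
- by move/esym/eqP; rewrite (negbTE (gNy _ k2i)).
- by move/eqP; rewrite (negbTE (gNy _ k1i)).
- by apply: g_inj; rewrite mem_r.
Qed.

Lemma exists_other (n : nat) (i : 'I_n) : 1 < n -> exists j : 'I_n, j != i.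
Proof.
move=> n_gt1; exists (if val i == 0 then Ordinal n_gt1 else Ordinal (ltnW n_gt1)).
by case: i => [[|k] ?]; apply/eqP => /(congr1 val).
Qed.

(* List colourings of the prism K_m x K_2: two m-cliques a(i), c(i) joined by
   the matching a(i) -- c(i); a(i) chooses from S i and c(i) from T i. *)
Section Prism.
Variables (m : nat) (S T : 'I_m -> seq nat).
Hypotheses (uS : forall i, uniq (S i)) (uT : forall i, uniq (T i)).
Hypotheses (leS : forall i, m <= size (S i)) (leT : forall i, m <= size (T i)).

Definition prism_colouring (ga gc : 'I_m -> nat) : Prop :=
  [/\ forall i, ga i \in S i, forall i, gc i \in T i,
      injective ga, injective gc & forall i, ga i != gc i].

Lemma pinned_in_S (i z : 'I_m) (y : nat) : z != i -> y \in S i ->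
  exists ga : 'I_m -> nat, [/\ ga i = y, forall k, ga k \in S k & injective ga].
Proof.
move=> zi yS; have leA k : m.-1 <= size (avail (S k) [:: y]).
  by apply: leq_trans (size_avail _ (uS k)); rewrite -subn1 leq_sub2r.
have [||||ga [gai gaM ga_inj]] := @pinned_choice _ (fun k => avail (S k) [:: y]) i z y zi.
- by move=> k; apply: avail_uniq.
- by move=> k _; rewrite mem_avail mem_head andbF.
- by move=> k _; rewrite card_ord; apply: leq_trans (leA k); rewrite -!subn1 leq_subr.
- by rewrite card_ord.
exists ga; split=> // k; case: (eqVneq k i) => [->|ki]; first by rewrite gai.
by have := gaM k ki; rewrite mem_avail => /andP[].
Qed.

(* Case 1: a colour y of S i lies in T j for some j <> i; give y to both a(i)
   and c(j). *)
Lemma prism_crossing (i j : 'I_m) (y : nat) : i != j -> y \in S i -> y \in T j ->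
  exists ga gc, prism_colouring ga gc.
Proof.
move=> ij yS yT; have ji : j != i by rewrite eq_sym.
have [ga [gai gaS ga_inj]] := pinned_in_S ji yS.
pose M k := avail (T k) [:: y; ga k].
have leMi : m.-1 <= size (M i).
  have -> : M i = avail (T i) [:: y] by apply: eq_filter => c; rewrite gai !inE orbb.
  by apply: leq_trans (size_avail _ (uT i)); rewrite -subn1 leq_sub2r.
have [||||gc [gcj gcM gc_inj]] := @pinned_choice _ M j i y ij.
- by move=> k; apply: avail_uniq.
- by move=> k _; rewrite mem_avail mem_head andbF.
- move=> k _; rewrite card_ord; apply: leq_trans (size_avail _ (uT k)).
  by rewrite -!subn1 -subnDA leq_sub2r.
- by rewrite card_ord.
exists ga, gc; split=> // k; case: (eqVneq k j) => [->|kj].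
- by rewrite gcj.
- by have := gcM k kj; rewrite mem_avail => /andP[].
- by rewrite gcj -gai; apply/eqP => /ga_inj; apply/eqP.
- by have := gcM k kj; rewrite mem_avail !inE negb_or => /and3P[_ _]; rewrite eq_sym.
Qed.

(* Case 2: a colour y of S i is missing from T i; give y to a(i), after which
   c(i) loses no colour. *)
Lemma prism_escaping (i : 'I_m) (y : nat) : 1 < m -> y \in S i -> y \notin T i ->
  exists ga gc, prism_colouring ga gc.
Proof.
move=> m_gt1 yS yNT; have [z zi] := exists_other i m_gt1.
have [ga [gai gaS ga_inj]] := pinned_in_S zi yS.
pose M k := avail (T k) [:: ga k].
have [|||gc [gcM gc_inj]] := @distinct_choice _ M i.
- by move=> k; apply: avail_uniq.
- move=> k; rewrite card_ord; apply: leq_trans (size_avail _ (uT k)).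
  by rewrite -subn1 leq_sub2r.
- rewrite card_ord (_ : M i = T i) //; apply/all_filterP/allP => c cT.
  by rewrite inE gai; apply: contraNneq yNT => <-.
exists ga, gc; split=> // k; have := gcM k; rewrite mem_avail inE => /andP[] //.
by rewrite eq_sym.
Qed.

(* Case 3: each S i is contained in T i and misses every other T j, so the
   S i are pairwise disjoint and two colours of S i serve a(i) and c(i). *)
Lemma prism_nested : 1 < m -> (forall i, {subset S i <= T i}) ->
  (forall i j c, i != j -> c \in S i -> c \notin T j) ->
  exists ga gc, prism_colouring ga gc.
Proof.
move=> m_gt1 subST disjST; have two i : 1 < size (S i) by apply: leq_trans (leS i).
pose ga i := nth 0 (S i) 0; pose gc i := nth 0 (S i) 1.
have gaS i : ga i \in S i by apply/mem_nth/ltnW/two.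
have gcS i : gc i \in S i by apply/mem_nth/two.
have inj (h : 'I_m -> nat) : (forall i, h i \in S i) -> injective h.
  move=> hS i j hij; apply/eqP; apply: contraT => ij.
  by have := disjST i j (h i) ij (hS i); rewrite hij subST.
exists ga, gc; split=> [i|i|||i]; [exact: gaS | exact/subST/gcS | exact: inj | exact: inj |].
by rewrite nth_uniq ?(ltnW (two i)).
Qed.

Theorem prism_choosable : 1 < m -> exists ga gc, prism_colouring ga gc.
Proof.
move=> m_gt1.
case: (boolP [exists i, exists j, (i != j) && has (mem (T j)) (S i)]) => [|no_crossing].
  by case/existsP=> i /existsP[j /andP[ij /hasP[y yS yT]]]; apply: prism_crossing ij yS yT.
case: (boolP [exists i, ~~ all (mem (T i)) (S i)]) => [|no_escape].
  by case/existsP=> i /allPn[y yS yNT]; apply: prism_escaping m_gt1 yS yNT.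
apply: prism_nested => // [i | i j c ij cS]; first apply/allP.
  by apply/negPn/negP => not_sub; case/negP: no_escape; apply/existsP; exists i.
apply/negP => cT; case/negP: no_crossing; apply/existsP; exists i; apply/existsP; exists j.
by rewrite ij; apply/hasP; exists c.
Qed.

End Prism.

Section ThetaFour.
Variable m : nat.
Local Notation V := (theta_vertex (fun _ : 'I_m => 4)).

Definition level (v : V) : 'I_3 :=
  match v with inl false => ord0 | inl true => ord_max | inr (existT _ j) => j end.

Definition linked (x y : V) : bool :=
  match x, y with
  | inl _, inr (existT _ j) | inr (existT _ j), inl _ => val j == 1
  | inr (existT i _), inr (existT i' _) => i == i'
  | inl _, inl _ => false
  end.

Local Ltac decompose_bool := repeat match goal with
  | H : is_true (_ || _) |- _ => case/orP: H => H
  | H : is_true (_ && _) |- _ => case/andP: H => H ?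
  | H : is_true (_ == _) |- _ => move/eqP: H => H; subst
  end.

Lemma sq_adj_level_linked (x y : V) :
  sq_adj (@theta_adj m (fun _ => 4)) x y -> (level x == level y) || linked x y.
Proof.
have no_chord : [exists i : 'I_m, 4 == 1] = false by apply/existsP => -[].
rewrite /sq_adj /theta_adj /= => /andP[_ /orP[adj | /existsP[z adj]]];
  [|case: z adj => [[]|[k [[|[|[|?]]] ?]]] adj];
  case: x adj => [[]|[i [[|[|[|?]]] ?]]]; case: y => [[]|[i' [[|[|[|?]]] ?]]] //=;
  rewrite ?no_chord //= => adj; decompose_bool; rewrite ?eqxx //=.
Qed.

Lemma card_theta4 : #|V| = 3 * m + 2.
Proof.
rewrite card_sum card_bool card_tagged card_ord addnC.
suff -> : forall s : seq 'I_m, sumn [seq 3 | _ <- s] = 3 * size s by rewrite size_enum_ord.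
by elim=> //= _ s ->; rewrite mulnS.
Qed.

Lemma level_class_le3 (f : V -> nat) (c : nat) :
  (forall x y, level x = level y -> f x = f y -> x = y) -> #|[pred v | f v == c]| <= 3.
Proof.
move=> f_inj; rewrite -[X in _ <= X](card_ord 3); apply: leq_card_in => x y.
by rewrite !inE => /eqP fx /eqP fy /f_inj; apply; rewrite fx fy.
Qed.

(* Colourings injective on levels and separating linked pairs are equitable
   colourings of the square, since 3 <= ceil((3m+2)/(m+2)) for m >= 3. *)
Lemma equitable_of_levels (L : V -> seq nat) (f : V -> nat) : 3 <= m ->
  (forall v, f v \in L v) ->
  (forall x y, level x = level y -> f x = f y -> x = y) ->
  (forall x y, linked x y -> x != y -> f x != f y) ->
  equitable_L_coloring (sq_adj (@theta_adj m (fun _ => 4))) m.+2 L f.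
Proof.
move=> m_ge3 fL f_inj f_linked; split=> // [x y adj | c].
  have /andP[xy _] := adj; case/orP: (sq_adj_level_linked adj) => [/eqP lv | lk].
    by apply: contra_neq xy; apply: f_inj.
  exact: f_linked.
apply: leq_trans (level_class_le3 c f_inj) _.
by rewrite card_theta4 leq_divRL //; lia.
Qed.

Definition pole_u : V := inl false.
Definition pole_w : V := inl true.
Definition inner (i : 'I_m) (j : 'I_3) : V := inr (existT _ i j).
Definition mid : 'I_3 := Ordinal (isT : 1 < 3).

Section Layered.
Variables (cu cw : nat) (ga gb gc : 'I_m -> nat).

Definition layered (v : V) : nat :=
  match v with
  | inl false => cu
  | inl true => cw
  | inr (existT i j) => match val j with 0 => ga i | 1 => gb i | _ => gc i end
  end.

Hypotheses (ga_inj : injective ga) (gb_inj : injective gb) (gc_inj : injective gc).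
Hypotheses (ga_u : forall i, ga i != cu) (gb_u : forall i, gb i != cu).
Hypotheses (gb_w : forall i, gb i != cw) (gc_w : forall i, gc i != cw).
Hypotheses (ga_gb : forall i, ga i != gb i) (gb_gc : forall i, gb i != gc i).
Hypotheses (ga_gc : forall i, ga i != gc i).

Lemma layered_level_injective (x y : V) :
  level x = level y -> layered x = layered y -> x = y.
Proof.
case: x => [[]|[i j]]; case: y => [[]|[i' j']] //= lv; subst;
  try by move: lv => /(congr1 val).
- by move/eqP; rewrite eq_sym (negbTE (gc_w _)).
- by move/eqP; rewrite eq_sym (negbTE (ga_u _)).
- by move/eqP; rewrite (negbTE (gc_w _)).
- by move/eqP; rewrite (negbTE (ga_u _)).
- by case: j' => [[|[|[|?]]] ?] //= => [/ga_inj | /gb_inj | /gc_inj] ->.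
Qed.

Lemma layered_linked (x y : V) : linked x y -> x != y -> layered x != layered y.
Proof.
case: x => [[]|[i j]]; case: y => [[]|[i' j']] //=.
- by case: j' => [[|[|[|?]]] ?] //= _ _; rewrite eq_sym.
- by case: j' => [[|[|[|?]]] ?] //= _ _; rewrite eq_sym.
- by case: j => [[|[|[|?]]] ?] //= _ _.
- by case: j => [[|[|[|?]]] ?] //= _ _.
- move=> /eqP<- neq; have {neq} : val j != val j' by apply: contra_neq neq => /val_inj ->.
  by case: j j' => [[|[|[|?]]] ?] [[|[|[|?]]] ?] //= _; rewrite 1?eq_sym.
Qed.

Lemma layered_mem (L : V -> seq nat) :
  cu \in L pole_u -> cw \in L pole_w -> (forall i, ga i \in L (inner i ord0)) ->
  (forall i, gb i \in L (inner i mid)) -> (forall i, gc i \in L (inner i ord_max)) ->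
  forall v, layered v \in L v.
Proof.
move=> cuL cwL gaL gbL gcL [[]|[i [[|[|[|k]]] lt_j]]] //=.
- by rewrite (_ : Ordinal lt_j = ord0) //; apply: val_inj.
- by rewrite (_ : Ordinal lt_j = mid) //; apply: val_inj.
- by rewrite (_ : Ordinal lt_j = ord_max) //; apply: val_inj.
Qed.

Lemma layered_equitable (L : V -> seq nat) : 3 <= m ->
  cu \in L pole_u -> cw \in L pole_w -> (forall i, ga i \in L (inner i ord0)) ->
  (forall i, gb i \in L (inner i mid)) -> (forall i, gc i \in L (inner i ord_max)) ->
  equitable_L_coloring (sq_adj (@theta_adj m (fun _ => 4))) m.+2 L layered.
Proof.
move=> m_ge3 cuL cwL gaL gbL gcL; apply: equitable_of_levels => //.
- exact: layered_mem.
- exact: layered_level_injective.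
- exact: layered_linked.
Qed.

End Layered.
End ThetaFour.

Theorem lemma3p8 (m : nat) (hm : 3 <= m) :
  equitably_choosable (sq_adj (@theta_adj m (fun _ => 4))) m.+2.
Proof.
move=> L hL; have uL v : uniq (L v) by case: (hL v).
have avail2 v a b : m <= size (avail (L v) [:: a; b]).
  by case: (hL v) => ul sL; apply: leq_trans (size_avail _ ul); rewrite sL subSS subSS subn0.
have head_in v : head 0 (L v) \in L v.
  by case: (hL v) => _; case: (L v) => // c s _; rewrite mem_head.
pose cu := head 0 (L (pole_u m)); pose cw := head 0 (L (pole_w m)).
have [||gb [gb_avail gb_inj]] :=
  @distinct_choice _ (fun i => avail (L (inner i mid)) [:: cu; cw])
  (Ordinal (ltnW (ltnW hm))) (fun i => avail_uniq _ (uL _)).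
- by move=> i; rewrite card_ord; apply: leq_trans (leq_pred m) (avail2 _ _ _).
- by rewrite card_ord.
have [|ga [gc [ga_avail gc_avail ga_inj gc_inj ga_gc]]] := @prism_choosable m
  (fun i => avail (L (inner i ord0)) [:: cu; gb i])
  (fun i => avail (L (inner i ord_max)) [:: cw; gb i])
  (fun i => avail_uniq _ (uL _)) (fun i => avail_uniq _ (uL _))
  (fun i => avail2 _ _ _) (fun i => avail2 _ _ _).
- exact: ltnW hm.
have /all_and3[gbL gb_u gb_w] :
    forall i, [/\ gb i \in L (inner i mid), gb i != cu & gb i != cw].
  by move=> i; apply/and3P; rewrite -mem_avail2; apply: gb_avail.
have /all_and3[gaL ga_u ga_gb] :
    forall i, [/\ ga i \in L (inner i ord0), ga i != cu & ga i != gb i].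
  by move=> i; apply/and3P; rewrite -mem_avail2; apply: ga_avail.
have /all_and3[gcL gc_w gc_gb] :
    forall i, [/\ gc i \in L (inner i ord_max), gc i != cw & gc i != gb i].
  by move=> i; apply/and3P; rewrite -mem_avail2; apply: gc_avail.
have gb_gc i : gb i != gc i by rewrite eq_sym.
exists (layered cu cw ga gb gc).
exact: (layered_equitable ga_inj gb_inj gc_inj ga_u gb_u gb_w gc_w ga_gb gb_gc ga_gc hm
          (head_in _) (head_in _) gaL gbL gcL).
Qed.
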